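(* Let $\Pi$ be the elliptic curve $u^2=(2s+1)(9s^2+2s+1)$ and define rational functions on $\Pi$ $$y=\frac12+\frac{45s^6+20s^5+95s^4+92s^3+39s^2-3}{4(5s^2+1)(s+1)^2\,u},\qquad t=\frac12+\frac{s(2s+1)^2(27s^4+28s^3+26s^2+12s+3)}{(s+1)^3u^3}.$$ Then, using $t$ as a local coordinate on $\Pi$ away from its critical points, $y(t)$ is a solution of $\mathrm{P}_{\mathrm{VI}}$ with parameters $(\theta_1,\theta_2,\theta_3,\theta_4)=(1/2,1/2,1/2,2/3)$.
   Context: $\mathrm{P}_{\mathrm{VI}}$ is the equation $$\frac{d^2y}{dt^2}=\frac12\Big(\frac1y+\frac1{y-1}+\frac1{y-t}\Big)\Big(\frac{dy}{dt}\Big)^2-\Big(\frac1t+\frac1{t-1}+\frac1{y-t}\Big)\frac{dy}{dt}+\frac{y(y-1)(y-t)}{t^2(t-1)^2}\Big(\alpha+\beta\frac{t}{y^2}+\gamma\frac{t-1}{(y-1)^2}+\delta\frac{t(t-1)}{(y-t)^2}\Big),$$ with $\alpha=(\theta_4-1)^2/2$, $\beta=-\theta_1^2/2$, $\gamma=\theta_3^2/2$, $\delta=(1-\theta_2^2)/2$. When $y,t$ are given as rational functions of a parameter on a curve, derivatives with respect to $t$ are computed via the chain rule. *)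

From mathcomp Require Import all_boot all_order all_algebra.
Set Implicit Arguments. Unset Strict Implicit. Unset Printing Implicit Defensive.
Import Order.TTheory GRing.Theory Num.Theory.
Local Open Scope ring_scope.

Definition derivation (K : fieldType) (D : K -> K) : Prop :=
  (forall a b : K, D (a + b) = D a + D b) /\
  (forall a b : K, D (a * b) = D a * b + a * D b).

Definition on_Pi (K : fieldType) (s u : K) : Prop :=
  u ^+ 2 = (2 * s + 1) * (9 * s ^+ 2 + 2 * s + 1).

Definition y_Pi (K : fieldType) (s u : K) : K :=
  1 / 2 + (45 * s ^+ 6 + 20 * s ^+ 5 + 95 * s ^+ 4 + 92 * s ^+ 3 + 39 * s ^+ 2 - 3)
          / (4 * (5 * s ^+ 2 + 1) * (s + 1) ^+ 2 * u).

Definition t_Pi (K : fieldType) (s u : K) : K :=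
  1 / 2 + s * (2 * s + 1) ^+ 2 * (27 * s ^+ 4 + 28 * s ^+ 3 + 26 * s ^+ 2 + 12 * s + 3)
          / ((s + 1) ^+ 3 * u ^+ 3).

(* The Painleve VI equation, with y1 = dy/dt and y2 = d^2y/dt^2. *)
Definition PVI (K : fieldType) (th1 th2 th3 th4 : K) (t y y1 y2 : K) : Prop :=
  let alpha := (th4 - 1) ^+ 2 / 2 in
  let beta := - (th1 ^+ 2) / 2 in
  let gamma := th3 ^+ 2 / 2 in
  let delta := (1 - th2 ^+ 2) / 2 in
  y2 = 1 / 2 * (1 / y + 1 / (y - 1) + 1 / (y - t)) * y1 ^+ 2
       - (1 / t + 1 / (t - 1) + 1 / (y - t)) * y1
       + y * (y - 1) * (y - t) / (t ^+ 2 * (t - 1) ^+ 2)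
         * (alpha + beta * t / y ^+ 2 + gamma * (t - 1) / (y - 1) ^+ 2
            + delta * t * (t - 1) / (y - t) ^+ 2).

From mathcomp Require Import all_boot all_order all_algebra.
From mathcomp Require Import ring.
Import Order.TTheory GRing.Theory Num.Theory.
Set Implicit Arguments.
Unset Strict Implicit.
Unset Printing Implicit Defensive.
Local Open Scope ring_scope.

(* On Pi write y = 1/2 + a(s) u and t = 1/2 + b(s) u with a, b rational in s.
   Since u^2 = P(s) gives D u = P'(s) u D s / (2 P(s)), both D y and D t are
   u D s times rational functions of s; hence dy/dt = c(s) and d^2y/dt^2 = g(s) u.
   Then y(y - 1), t(t - 1) and (y - t)/u are rational in s too, and P_VI with
   parameters (1/2, 1/2, 1/2, 2/3), divided by u, becomes an identity between
   rational functions of s, which [field] verifies.  Writing out the numerators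
   of D y, D t and D(dy/dt) keeps each of these verifications small. *)

Section Derivation.
Context {K : fieldType} {D : K -> K} (HD : derivation D).

Lemma derivationD a b : D (a + b) = D a + D b. Proof. exact: HD.1. Qed.

Lemma derivationM a b : D (a * b) = D a * b + a * D b. Proof. exact: HD.2. Qed.

Lemma derivation0 : D 0 = 0.
Proof. by apply: (addrI (D 0)); rewrite -derivationD !addr0. Qed.

Lemma derivation1 : D 1 = 0.
Proof.
have := derivationM 1 1; rewrite !mulr1 mul1r => D1.
by apply: (addrI (D 1)); rewrite addr0 -D1.
Qed.

Lemma derivation_nat n : D n%:R = 0.
Proof.
by elim: n => [|n IHn]; rewrite ?derivation0 // mulrS derivationD IHn derivation1 addr0.
Qed.

Lemma derivationN a : D (- a) = - D a.
Proof. by apply: (addrI (D a)); rewrite -derivationD !subrr derivation0. Qed.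

Lemma derivationB a b : D (a - b) = D a - D b.
Proof. by rewrite derivationD derivationN. Qed.

Lemma derivationXS a n : D (a ^+ n.+1) = n.+1%:R * a ^+ n * D a.
Proof.
elim: n => [|n IHn]; first by rewrite expr1 expr0 mulr1 mul1r.
by rewrite exprS derivationM IHn [n.+2%:R]mulrS exprS; ring.
Qed.

Lemma derivationV a : a != 0 -> D a^-1 = - D a / a ^+ 2.
Proof.
move=> a_neq0; have := derivationM a a^-1.
rewrite mulfV // derivation1 => /eqP; rewrite eq_sym addr_eq0 => /eqP Da.
by apply: (mulfI a_neq0); rewrite -[a * D a^-1]opprK -Da; field.
Qed.

Lemma derivation_natV n : D n%:R^-1 = 0.
Proof.
have [->|n_neq0] := eqVneq (n%:R : K) 0; first by rewrite invr0 derivation0.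
by rewrite derivationV // derivation_nat oppr0 mul0r.
Qed.

Lemma derivation_sqrt p u : u ^+ 2 = p -> u != 0 -> 2 != 0 :> K ->
  D u = D p * u / (2 * p).
Proof.
move=> <- u_neq0 two_neq0; rewrite derivationXS.
by field; rewrite two_neq0 u_neq0.
Qed.

End Derivation.

Ltac derivation_simpl HD :=
  rewrite ?(derivation_nat HD, derivation_natV HD, derivation0 HD, derivation1 HD,
            derivationD HD, derivationB HD, derivationN HD, derivationM HD,
            derivationXS HD).

Section HalfShift.
Variable K : fieldType.
Hypothesis HK : [pchar K] =i pred0.

Lemma natrS_neq0 n : n.+1%:R != 0 :> K.
Proof. by move/pcharf0P: HK => ->. Qed.

Lemma half_shift_mulB1 (x u : K) :
  (1/2 + x * u) * (1/2 + x * u - 1) = x ^+ 2 * u ^+ 2 - 1/4.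
Proof. by field; rewrite !natrS_neq0. Qed.

(* With y = 1/2 + a u, t = 1/2 + b u and u^2 = P one has y (y - 1) = Y1,
   t (t - 1) = T1 and y - t = YT u.  These are separate arguments so that a
   caller can supply them in reduced form, which keeps [field] fast. *)
Lemma PVI_half_shift (a b c g u P Y1 T1 YT : K) :
  P = u ^+ 2 -> Y1 = a ^+ 2 * P - 1/4 -> T1 = b ^+ 2 * P - 1/4 -> YT = a - b ->
  u != 0 -> Y1 != 0 -> T1 != 0 -> YT != 0 ->
  g = (a / Y1 + 1 / (2 * YT * P)) * c ^+ 2 - (2 * b / T1 + 1 / (YT * P)) * c
      + Y1 * YT / T1 ^+ 2
        * (1/18 + 1/8 * (- (1/4) - a ^+ 2 * P + 2 * a * b * P) / Y1 ^+ 2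
           + 3/8 * T1 / (YT ^+ 2 * P)) ->
  PVI (1/2) (1/2) (1/2) (2/3) (1/2 + b * u) (1/2 + a * u) c (g * u).
Proof.
move=> -> -> -> -> u_neq0 Y1_neq0 T1_neq0 YT_neq0 ->.
(* The side conditions of [field] below, in the normal form it produces. *)
have shift_neq0 x : x ^+ 2 * u ^+ 2 - 1/4 != 0 ->
    [/\ (x * u) ^+ 2 * 4 - 1 != 0, 1 + x * u * 2 != 0 & 1 + x * u * 2 - 2 != 0].
  move=> x_neq0; have x4_neq0 : (x * u) ^+ 2 * 4 - 1 != 0.
    have -> : (x * u) ^+ 2 * 4 - 1 = 4 * (x ^+ 2 * u ^+ 2 - 1/4).
      by field; rewrite natrS_neq0.
    by rewrite mulf_neq0 ?natrS_neq0.
  have : (1 + x * u * 2) * (1 + x * u * 2 - 2) != 0.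
    by rewrite (_ : _ * _ = (x * u) ^+ 2 * 4 - 1) //; ring.
  by rewrite mulf_eq0 negb_or => /andP[].
have [y4_neq0 y_neq0 y_neq1] := shift_neq0 _ Y1_neq0.
have [t4_neq0 t_neq0 t_neq1] := shift_neq0 _ T1_neq0.
have yt_neq0 : 1 + a * u * 2 - (1 + b * u * 2) != 0.
  by rewrite (_ : _ - _ = (a - b) * u * 2) ?mulf_neq0 ?natrS_neq0 //; ring.
rewrite /PVI; field.
by rewrite !natrS_neq0 y4_neq0 y_neq0 y_neq1 t4_neq0 t_neq0 t_neq1 yt_neq0 u_neq0
           YT_neq0.
Qed.
End HalfShift.

Definition cubic_Pi (K : fieldType) (s : K) : K :=
  (2 * s + 1) * (9 * s ^+ 2 + 2 * s + 1).

Definition quartic_Pi (K : fieldType) (s : K) : K :=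
  27 * s ^+ 4 + 28 * s ^+ 3 + 26 * s ^+ 2 + 12 * s + 3.

Definition ynum_Pi (K : fieldType) (s : K) : K :=
  45 * s ^+ 6 + 20 * s ^+ 5 + 95 * s ^+ 4 + 92 * s ^+ 3 + 39 * s ^+ 2 - 3.

Definition ycoef_Pi (K : fieldType) (s : K) : K :=
  ynum_Pi s / (4 * (5 * s ^+ 2 + 1) * (s + 1) ^+ 2 * cubic_Pi s).

Definition tcoef_Pi (K : fieldType) (s : K) : K :=
  s * quartic_Pi s / ((s + 1) ^+ 3 * (9 * s ^+ 2 + 2 * s + 1) ^+ 2).

(* Ring numerals are unary ([n%:R]), so coefficients of at least 1000 are
   written in base 1000, i.e. by their groups of three decimal digits. *)
Definition dynum_Pi (K : fieldType) (s : K) : K :=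
  12 + 177 * s + 918 * s ^+ 2 + (2 * 1000 + 865) * s ^+ 3
  + (5 * 1000 + 640) * s ^+ 4 + (4 * 1000 + 806) * s ^+ 5
  - (5 * 1000 + 388) * s ^+ 6 - (14 * 1000 + 970) * s ^+ 7
  - (10 * 1000 + 260) * s ^+ 8 + (2 * 1000 + 25) * s ^+ 9
  + (12 * 1000 + 150) * s ^+ 10 + (2 * 1000 + 25) * s ^+ 11.

Definition dycoef_Pi (K : fieldType) (s : K) : K :=
  dynum_Pi s / (4 * (s + 1) ^+ 3 * (5 * s ^+ 2 + 1) ^+ 2 * (2 * s + 1) ^+ 2
                * (9 * s ^+ 2 + 2 * s + 1) ^+ 2).

Definition dtnum_Pi (K : fieldType) (s : K) : K :=
  3 + 24 * s + 54 * s ^+ 2 - 12 * s ^+ 3 - 168 * s ^+ 4 - 144 * s ^+ 5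
  + 162 * s ^+ 6 + 324 * s ^+ 7 - 243 * s ^+ 8.

Definition dtcoef_Pi (K : fieldType) (s : K) : K :=
  dtnum_Pi s / ((s + 1) ^+ 4 * (2 * s + 1) * (9 * s ^+ 2 + 2 * s + 1) ^+ 3).

Definition dydt_Pi (K : fieldType) (s : K) : K :=
  dynum_Pi s * (s + 1) * (9 * s ^+ 2 + 2 * s + 1)
  / (4 * (5 * s ^+ 2 + 1) ^+ 2 * (2 * s + 1) * dtnum_Pi s).

Definition ddydtnum_Pi (K : fieldType) (s : K) : K :=
  279 + (6 * 1000 + 318) * s + (74 * 1000 + 124) * s ^+ 2
  + (559 * 1000 + 512) * s ^+ 3
  + ((2 * 1000 + 991) * 1000 + 960) * s ^+ 4
  + ((12 * 1000 + 28) * 1000 + 680) * s ^+ 5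
  + ((37 * 1000 + 519) * 1000 + 362) * s ^+ 6
  + ((91 * 1000 + 906) * 1000 + 560) * s ^+ 7
  + ((176 * 1000 + 403) * 1000 + 15) * s ^+ 8
  + ((259 * 1000 + 844) * 1000 + 238) * s ^+ 9
  + ((273 * 1000 + 563) * 1000 + 946) * s ^+ 10
  + ((141 * 1000 + 916) * 1000 + 176) * s ^+ 11
  - ((174 * 1000 + 344) * 1000 + 472) * s ^+ 12
  - ((740 * 1000 + 345) * 1000 + 760) * s ^+ 13
  - (((1 * 1000 + 757) * 1000 + 864) * 1000 + 556) * s ^+ 14
  - (((2 * 1000 + 986) * 1000 + 905) * 1000 + 888) * s ^+ 15
  - (((2 * 1000 + 635) * 1000 + 924) * 1000 + 779) * s ^+ 16
  + (((1 * 1000 + 686) * 1000 + 947) * 1000 + 850) * s ^+ 17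
  + (((8 * 1000 + 402) * 1000 + 987) * 1000 + 520) * s ^+ 18
  + (((9 * 1000 + 150) * 1000 + 767) * 1000 + 640) * s ^+ 19
  - (((1 * 1000 + 194) * 1000 + 782) * 1000 + 400) * s ^+ 20
  - (((10 * 1000 + 608) * 1000 + 748) * 1000 + 200) * s ^+ 21
  - (((6 * 1000 + 441) * 1000 + 261) * 1000 + 750) * s ^+ 22
  + (((2 * 1000 + 283) * 1000 + 228) * 1000) * s ^+ 23
  + (((3 * 1000 + 871) * 1000 + 810) * 1000 + 125) * s ^+ 24
  + ((369 * 1000 + 56) * 1000 + 250) * s ^+ 25
  - ((221 * 1000 + 433) * 1000 + 750) * s ^+ 26.

Definition ddydtcoef_Pi (K : fieldType) (s : K) : K :=
  ddydtnum_Pi s / (4 * (5 * s ^+ 2 + 1) ^+ 4 * (2 * s + 1) ^+ 2 * dtnum_Pi s ^+ 2).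

Definition d2ydt2_Pi (K : fieldType) (s : K) : K :=
  ddydtnum_Pi s * (s + 1) ^+ 4 * (9 * s ^+ 2 + 2 * s + 1) ^+ 2
  / (4 * (5 * s ^+ 2 + 1) ^+ 4 * (2 * s + 1) ^+ 2 * dtnum_Pi s ^+ 3).

Definition yyB1_Pi (K : fieldType) (s : K) : K :=
  (ynum_Pi s ^+ 2 - 4 * (5 * s ^+ 2 + 1) ^+ 2 * (s + 1) ^+ 4 * cubic_Pi s)
  / (16 * (s + 1) ^+ 4 * (5 * s ^+ 2 + 1) ^+ 2 * cubic_Pi s).

Definition ttB1_Pi (K : fieldType) (s : K) : K :=
  (4 * s ^+ 2 * (2 * s + 1) * quartic_Pi s ^+ 2
   - (s + 1) ^+ 6 * (9 * s ^+ 2 + 2 * s + 1) ^+ 3)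
  / (4 * (s + 1) ^+ 6 * (9 * s ^+ 2 + 2 * s + 1) ^+ 3).

Definition yBt_Pi (K : fieldType) (s : K) : K :=
  (ynum_Pi s * (s + 1) * (9 * s ^+ 2 + 2 * s + 1)
   - 4 * s * (5 * s ^+ 2 + 1) * (2 * s + 1) * quartic_Pi s)
  / (4 * (s + 1) ^+ 3 * (5 * s ^+ 2 + 1) * (2 * s + 1) * (9 * s ^+ 2 + 2 * s + 1) ^+ 2).

Section CurvePi.
Variables (K : fieldType) (D : K -> K) (s u : K).
Hypotheses (HK : [pchar K] =i pred0) (HD : derivation D) (Hcurve : on_Pi s u).
Hypotheses (u_neq0 : u != 0) (s1_neq0 : s + 1 != 0) (s5_neq0 : 5 * s ^+ 2 + 1 != 0).

Let natr_neq0 := natrS_neq0 HK.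
Let u2E : u ^+ 2 = cubic_Pi s := Hcurve.

Lemma cubic_Pi_factors_neq0 : 2 * s + 1 != 0 /\ 9 * s ^+ 2 + 2 * s + 1 != 0.
Proof. by apply/andP; rewrite -negb_or -mulf_eq0 -[_ * _]u2E expf_neq0. Qed.

Let s2_neq0 := cubic_Pi_factors_neq0.1.
Let s9_neq0 := cubic_Pi_factors_neq0.2.

Ltac neq0 :=
  rewrite /cubic_Pi;
  repeat first [ apply/andP; split | apply: mulf_neq0 | apply: expf_neq0 ];
  rewrite ?natr_neq0 //.

Lemma derivation_u : D u = (54 * s ^+ 2 + 26 * s + 4) * D s * u / (2 * cubic_Pi s).
Proof.
rewrite (derivation_sqrt HD Hcurve) ?natr_neq0 //.
by derivation_simpl HD; rewrite /cubic_Pi; field; neq0.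
Qed.

Lemma y_PiE : y_Pi s u = 1/2 + ycoef_Pi s * u.
Proof. by rewrite /ycoef_Pi /ynum_Pi -u2E /y_Pi; field; neq0. Qed.

Lemma t_PiE : t_Pi s u = 1/2 + tcoef_Pi s * u.
Proof.
have -> : t_Pi s u = 1/2 + s * (2 * s + 1) ^+ 2 * quartic_Pi s
                             / ((s + 1) ^+ 3 * (u ^+ 2) ^+ 2) * u.
  by rewrite /t_Pi /quartic_Pi; field; neq0.
by rewrite u2E /tcoef_Pi /cubic_Pi; field; neq0.
Qed.

Lemma derivation_y_Pi : D (y_Pi s u) = dycoef_Pi s * u * D s.
Proof.
rewrite y_PiE /ycoef_Pi /ynum_Pi /cubic_Pi; derivation_simpl HD.
rewrite (derivationV HD); last by neq0.
derivation_simpl HD; rewrite derivation_u /dycoef_Pi /dynum_Pi /cubic_Pi.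
by field; neq0.
Qed.

Lemma derivation_t_Pi : D (t_Pi s u) = dtcoef_Pi s * u * D s.
Proof.
rewrite t_PiE /tcoef_Pi /quartic_Pi; derivation_simpl HD.
rewrite (derivationV HD); last by neq0.
derivation_simpl HD; rewrite derivation_u /dtcoef_Pi /dtnum_Pi /cubic_Pi.
by field; neq0.
Qed.

Lemma derivation_t_Pi_neq0 : D (t_Pi s u) != 0 -> D s != 0 /\ dtnum_Pi s != 0.
Proof.
rewrite derivation_t_Pi /dtcoef_Pi => Dt_neq0.
by split; apply: contraNneq Dt_neq0 => ->; rewrite !(mul0r, mulr0).
Qed.

Section DtNonzero.
Hypotheses (Ds_neq0 : D s != 0) (dtnum_neq0 : dtnum_Pi s != 0).

Lemma dydt_PiE : D (y_Pi s u) / D (t_Pi s u) = dydt_Pi s.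
Proof.
rewrite derivation_y_Pi derivation_t_Pi /dycoef_Pi /dtcoef_Pi /dydt_Pi.
by field; neq0.
Qed.

Lemma derivation_dydt_Pi : D (dydt_Pi s) = ddydtcoef_Pi s * D s.
Proof.
rewrite /dydt_Pi; derivation_simpl HD.
rewrite (derivationV HD); last by neq0.
rewrite /ddydtcoef_Pi /ddydtnum_Pi /dynum_Pi /dtnum_Pi; derivation_simpl HD.
by field; neq0.
Qed.

Lemma d2ydt2_PiE : D (dydt_Pi s) / D (t_Pi s u) = d2ydt2_Pi s * u.
Proof.
apply: (mulIf u_neq0); rewrite -[RHS]mulrA -expr2 u2E.
rewrite derivation_dydt_Pi derivation_t_Pi /ddydtcoef_Pi /dtcoef_Pi /d2ydt2_Pi /cubic_Pi.
by field; neq0.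
Qed.

End DtNonzero.

Lemma yyB1_PiE : yyB1_Pi s = ycoef_Pi s ^+ 2 * cubic_Pi s - 1/4.
Proof. by rewrite /yyB1_Pi /ycoef_Pi /cubic_Pi; field; neq0. Qed.

Lemma ttB1_PiE : ttB1_Pi s = tcoef_Pi s ^+ 2 * cubic_Pi s - 1/4.
Proof. by rewrite /ttB1_Pi /tcoef_Pi /cubic_Pi; field; neq0. Qed.

Lemma yBt_PiE : yBt_Pi s = ycoef_Pi s - tcoef_Pi s.
Proof. by rewrite /yBt_Pi /ycoef_Pi /tcoef_Pi /cubic_Pi; field; neq0. Qed.

Lemma yyB1_Pi_neq0 : y_Pi s u != 0 -> y_Pi s u != 1 -> yyB1_Pi s != 0.
Proof.
rewrite yyB1_PiE -u2E -(half_shift_mulB1 HK) -y_PiE => y_neq0 y_neq1.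
by rewrite mulf_neq0 // subr_eq0.
Qed.

Lemma ttB1_Pi_neq0 : t_Pi s u != 0 -> t_Pi s u != 1 -> ttB1_Pi s != 0.
Proof.
rewrite ttB1_PiE -u2E -(half_shift_mulB1 HK) -t_PiE => t_neq0 t_neq1.
by rewrite mulf_neq0 // subr_eq0.
Qed.

Lemma yBt_Pi_neq0 : y_Pi s u != t_Pi s u -> yBt_Pi s != 0.
Proof.
rewrite -subr_eq0 (_ : _ - _ = yBt_Pi s * u); last by rewrite y_PiE t_PiE yBt_PiE; ring.
by rewrite mulf_eq0 negb_or => /andP[].
Qed.

Lemma PVI_Pi_identity : dtnum_Pi s != 0 -> yyB1_Pi s != 0 -> ttB1_Pi s != 0 ->
    yBt_Pi s != 0 ->
  let a := ycoef_Pi s in let b := tcoef_Pi s in let c := dydt_Pi s in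
  let P := cubic_Pi s in let Y1 := yyB1_Pi s in let T1 := ttB1_Pi s in
  let YT := yBt_Pi s in
  d2ydt2_Pi s
  = (a / Y1 + 1 / (2 * YT * P)) * c ^+ 2 - (2 * b / T1 + 1 / (YT * P)) * c
    + Y1 * YT / T1 ^+ 2
      * (1/18 + 1/8 * (- (1/4) - a ^+ 2 * P + 2 * a * b * P) / Y1 ^+ 2
         + 3/8 * T1 / (YT ^+ 2 * P)).
Proof.
move=> dtnum_neq0 Y1_neq0 T1_neq0 YT_neq0 a b c P Y1 T1 YT.
rewrite {}/a {}/b {}/c {}/P {}/Y1 {}/T1 {}/YT.
move: Y1_neq0 T1_neq0 YT_neq0; rewrite /yyB1_Pi /ttB1_Pi /yBt_Pi !mulf_eq0 !negb_or.
move=> /andP[Y1_neq0 _] /andP[T1_neq0 _] /andP[YT_neq0 _].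
rewrite /d2ydt2_Pi /ycoef_Pi /tcoef_Pi /dydt_Pi /yyB1_Pi /ttB1_Pi /yBt_Pi /cubic_Pi.
rewrite /ynum_Pi /quartic_Pi /dynum_Pi /dtnum_Pi /ddydtnum_Pi.
by field; neq0.
Qed.

End CurvePi.

Theorem mainTheorem11 (K : fieldType) (HK : [pchar K] =i pred0)
  (D : K -> K) (HD : derivation D) (s u : K) (Hcurve : on_Pi s u)
  (Hu : u != 0) (Hs1 : s + 1 != 0) (Hs5 : 5 * s ^+ 2 + 1 != 0)
  (Ht : D (t_Pi s u) != 0)
  (Ht0 : t_Pi s u != 0) (Ht1 : t_Pi s u != 1)
  (Hy0 : y_Pi s u != 0) (Hy1 : y_Pi s u != 1) (Hyt : y_Pi s u != t_Pi s u) :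
  let t := t_Pi s u in
  let y := y_Pi s u in
  let y1 := D y / D t in
  let y2 := D y1 / D t in
  PVI (1 / 2) (1 / 2) (1 / 2) (2 / 3) t y y1 y2.
Proof.
move=> t y y1 y2; rewrite {}/y2 {}/y1 {}/y {}/t.
have [Ds_neq0 dtnum_neq0] := derivation_t_Pi_neq0 HK HD Hcurve Hu Hs1 Ht.
have Y1_neq0 := yyB1_Pi_neq0 HK Hcurve Hu Hs1 Hs5 Hy0 Hy1.
have T1_neq0 := ttB1_Pi_neq0 HK Hcurve Hu Hs1 Ht0 Ht1.
have YT_neq0 := yBt_Pi_neq0 HK Hcurve Hu Hs1 Hs5 Hyt.
rewrite dydt_PiE // d2ydt2_PiE // y_PiE // t_PiE //.
apply: (PVI_half_shift HK (esym Hcurve) (yyB1_PiE HK Hcurve Hu Hs1 Hs5)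
          (ttB1_PiE HK Hcurve Hu Hs1) (yBt_PiE HK Hcurve Hu Hs1 Hs5)
          Hu Y1_neq0 T1_neq0 YT_neq0).
exact: PVI_Pi_identity HK Hcurve Hu Hs1 Hs5 dtnum_neq0 Y1_neq0 T1_neq0 YT_neq0.
Qed.
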